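(* Let $A=\{\mathbf{a}_1,\dots,\mathbf{a}_m\}\subset\mathbb{Z}^n$ with $\mathbb{N}A$ an affine semigroup, and let $E_1,E_2$ be nonempty disjoint subsets of $\{1,\dots,m\}$ with $E_1\cup E_2=\{1,\dots,m\}$. Then $\mathbb{N}A$ is the s-gluing of $\mathbb{N}A^{E_1}$ and $\mathbb{N}A^{E_2}$ if and only if $\sigma=\mathrm{pos}_{\mathbb{Q}}(A)$ is the direct sum $\sigma_{E_1}\oplus\sigma_{E_2}$, i.e. if and only if there exists $\mathbf{a}\in\sigma_{E_1}\cap\sigma_{E_2}$ with $\mathrm{span}_{\mathbb{Q}}(\sigma_{E_1})\cap\mathrm{span}_{\mathbb{Q}}(\sigma_{E_2})=\mathbb{Q}\mathbf{a}$.
   Context: $\mathbb{N}A$ is the set of nonnegative integer combinations of $A$; an affine semigroup is a finitely generated subsemigroup $S\subset\mathbb{Z}^n$ with $S\cap(-S)=\{\mathbf0\}$. For $E\subset\{1,\dots,m\}$, $A^E=\{\mathbf{a}_i:i\in E\}$ and $\sigma_E=\mathrm{pos}_{\mathbb{Q}}(A^E)$ (nonnegative rational combinations); note $\sigma=\mathrm{pos}_{\mathbb{Q}}(\sigma_{E_1}\cup\sigma_{E_2})$. $\mathbb{N}A$ is the s-gluing of $\mathbb{N}A^{E_1}$ and $\mathbb{N}A^{E_2}$ if there is an integer vector $\mathbf{a}$ with $\mathbb{Z}\mathbf{a}=\mathbb{Z}A^{E_1}\cap\mathbb{Z}A^{E_2}$ and $t\mathbf{a}\in\mathbb{N}A^{E_1}\cap\mathbb{N}A^{E_2}$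 for some positive integer $t$. *)

From HB Require Import structures.
From mathcomp Require Import all_boot all_order all_algebra.
Set Implicit Arguments. Unset Strict Implicit. Unset Printing Implicit Defensive.
Import Order.TTheory GRing.Theory Num.Theory.
Local Open Scope ring_scope.

Section AffineDefs.
Variables (m n : nat) (A : 'I_m -> 'rV[int]_n).

Definition AQ (i : 'I_m) : 'rV[rat]_n := map_mx (fun z : int => z%:~R) (A i).

Definition NAset (E : {set 'I_m}) (x : 'rV[int]_n) : Prop :=
  exists c : 'I_m -> nat, x = \sum_(i in E) (c i)%:Z *: A i.

Definition ZAset (E : {set 'I_m}) (x : 'rV[int]_n) : Prop :=
  exists c : 'I_m -> int, x = \sum_(i in E) c i *: A i.

Definition sigmaE (E : {set 'I_m}) (x : 'rV[rat]_n) : Prop :=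
  exists c : 'I_m -> rat, (forall i, 0 <= c i) /\ x = \sum_(i in E) c i *: AQ i.

(* NA is an affine semigroup: NA /\ -NA = {0} (finite generation is automatic) *)
Definition is_affine_semigroup : Prop :=
  forall x, NAset setT x -> NAset setT (- x) -> x = 0.

Definition s_gluing (E1 E2 : {set 'I_m}) : Prop :=
  exists a : 'rV[int]_n,
    (forall x, (exists z : int, x = z *: a) <-> (ZAset E1 x /\ ZAset E2 x)) /\
    (exists t : nat, (0 < t)%N /\ NAset E1 (t%:Z *: a) /\ NAset E2 (t%:Z *: a)).

End AffineDefs.

Definition spanQ (n : nat) (S : 'rV[rat]_n -> Prop) (x : 'rV[rat]_n) : Prop :=
  exists (k : nat) (v : 'I_k -> 'rV[rat]_n) (c : 'I_k -> rat),
    (forall j, S (v j)) /\ x = \sum_(j < k) c j *: v j.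

Definition cone_direct_sum (m n : nat) (A : 'I_m -> 'rV[int]_n)
    (E1 E2 : {set 'I_m}) : Prop :=
  exists a : 'rV[rat]_n,
    sigmaE A E1 a /\ sigmaE A E2 a /\
    (forall x, (spanQ (sigmaE A E1) x /\ spanQ (sigmaE A E2) x)
               <-> exists q : rat, x = q *: a).

From HB Require Import structures.
From mathcomp Require Import all_boot all_order all_algebra.
From Stdlib Require Import Classical Wf_nat.
Set Implicit Arguments. Unset Strict Implicit. Unset Printing Implicit Defensive.
Import Order.TTheory GRing.Theory Num.Theory.
Local Open Scope ring_scope.

(* Clearing denominators, span_Q(sigma_E) is Q (x) ZA^E and every rational
   point of sigma_E has a positive integer multiple in NA^E.  If NA is the
   s-gluing along a, then a/t lies in both cones, and a vector of both spans
   has an integer multiple in ZA^E1 /\ ZA^E2 = Za, so it lies on Qa.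
   Conversely, if span(sigma_E1) /\ span(sigma_E2) = Qa, the lattice
   ZA^E1 /\ ZA^E2 embeds in the line Qa and is therefore cyclic, generated by
   some g; a positive integer multiple b of a lies in NA^E1 /\ NA^E2, and
   b = z g with z <> 0, so the generator sgz(z) g glues with t = |z|. *)

Local Notation ratv v := (map_mx (fun z : int => z%:~R : rat) v).

Lemma ratv_inj n : injective (fun v : 'rV[int]_n => ratv v).
Proof.
move=> u v /matrixP uv; apply/matrixP=> i j.
by have := uv i j; rewrite !mxE; apply: intr_inj.
Qed.

Section IntLattices.
Variables (n : nat) (L : 'rV[int]_n -> Prop).
Hypotheses (L0 : L 0) (LD : forall u v, L u -> L v -> L (u + v))
  (LZ : forall (z : int) u, L u -> L (z *: u)).

Lemma cyclic_of_coord_inj (j : 'I_n) :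
  (forall x, L x -> x ord0 j = 0 -> x = 0) ->
  exists g, forall x, L x <-> exists z : int, x = z *: g.
Proof.
move=> coord_inj.
have [[b [Lb bj]] | L_trivial] := classic (exists b, L b /\ b ord0 j != 0); last first.
  exists 0 => x; split=> [Lx | [z ->]]; last by rewrite scaler0.
  exists 0; rewrite scaler0; apply: coord_inj => //.
  by apply/eqP; apply: contraT => xj; case: L_trivial; exists x.
pose P k := (0 < k)%N /\ exists2 x, L x & x ord0 j = k%:Z.
have P_inh : exists k, P k.
  exists `|b ord0 j|%N; split; first by rewrite absz_gt0.
  by exists (sgz (b ord0 j) *: b); [exact: LZ | rewrite mxE abszEsg].
have [k [[[k_gt0 [g Lg gj]] k_min] _]] :=
  dec_inh_nat_subset_has_unique_least_element P (fun k => classic (P k)) P_inh.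
exists g => x; split=> [Lx | [z ->]]; last exact: LZ.
have k_neq0 : k%:Z != 0 by rewrite eqz_nat -lt0n.
set q := (x ord0 j %/ k%:Z)%Z; set r := (x ord0 j %% k%:Z)%Z.
have Ly : L (x + (- q) *: g) by apply: LD => //; apply: LZ.
have yj : (x + (- q) *: g) ord0 j = r.
  by rewrite !mxE gj {1}(divz_eq (x ord0 j) k) -/q -/r mulNr addrAC subrr add0r.
have r0 : r = 0.
  apply/eqP; apply: contraT => r_neq0.
  have r_ge0 : 0 <= r := modz_ge0 _ k_neq0.
  have Pr : P `|r|%N.
    split; first by rewrite absz_gt0.
    by exists (x + (- q) *: g); rewrite // yj abszE ger0_norm.
  move: (k_min _ Pr) => /ssrnat.leP; rewrite leqNgt -ltz_nat abszE ger0_norm //.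
  by rewrite ltz_mod.
exists q; have := coord_inj _ Ly; rewrite yj r0 => /(_ erefl) /eqP.
by rewrite scaleNr subr_eq0 => /eqP.
Qed.

Lemma cyclic_of_line (v : 'rV[rat]_n) :
  (forall x, L x -> exists q : rat, ratv x = q *: v) ->
  exists g, forall x, L x <-> exists z : int, x = z *: g.
Proof.
move=> L_line.
have v_cases : v = 0 \/ exists j, v ord0 j != 0.
  case: (pickP [pred j | v ord0 j != 0]) => [j vj | v_eq0]; first by right; exists j.
  by left; apply/rowP => j; rewrite mxE; apply/eqP/negbFE/v_eq0.
case: v_cases => [v0 | [j vj]].
  exists 0 => x; split=> [Lx | [z ->]]; last by rewrite scaler0.
  have [q xq] := L_line x Lx; exists 0; rewrite !scaler0.
  by apply: ratv_inj; rewrite xq v0 scaler0 map_mx0.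
apply: (cyclic_of_coord_inj (j := j)) => x Lx xj.
have [q xq] := L_line x Lx.
have /eqP : (ratv x) ord0 j = q * v ord0 j by rewrite xq mxE.
rewrite mxE xj eq_sym mulf_eq0 (negbTE vj) orbF => /eqP q0.
by apply: ratv_inj; rewrite xq q0 scale0r map_mx0.
Qed.

End IntLattices.

Section IntMultiples.
Variable n : nat.
Implicit Types (S : 'rV[int]_n -> Prop) (x : 'rV[rat]_n).

Definition int_multiple_in S x :=
  exists2 d : nat, (0 < d)%N & exists2 y, S y & ratv y = d%:R *: x.

Lemma int_multiple_in_sum S (I : Type) (r : seq I) (P : pred I) (F : I -> 'rV[rat]_n) :
  S 0 -> (forall u v, S u -> S v -> S (u + v)) ->
  (forall (k : nat) u, S u -> S (k%:Z *: u)) ->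
  (forall i, P i -> int_multiple_in S (F i)) ->
  int_multiple_in S (\sum_(i <- r | P i) F i).
Proof.
move=> S0 SD SZ SF; apply: (big_ind (int_multiple_in S)) => //.
  by exists 1%N => //; exists 0; rewrite ?map_mx0 ?scaler0.
move=> x1 x2 [d1 d1_gt0 [y1 Sy1 y1x]] [d2 d2_gt0 [y2 Sy2 y2x]].
exists (d1 * d2)%N; first by rewrite muln_gt0 d1_gt0.
exists (d2%:Z *: y1 + d1%:Z *: y2); first by apply: SD; apply: SZ.
rewrite map_mxD !map_mxZ y1x y2x !scalerA scalerDr natrM [d2%:R * _]mulrC.
by rewrite !pmulrn.
Qed.

Lemma int_multiple_in_scale S (c : rat) (y : 'rV[int]_n) :
  S (numq c *: y) -> int_multiple_in S (c *: ratv y).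
Proof.
move=> Sy; exists `|denq c|%N; first by rewrite absz_gt0 denq_neq0.
exists (numq c *: y) => //.
by rewrite map_mxZ /= scalerA natr_absz gtr0_norm ?denq_gt0 // numqE mulrC.
Qed.

Lemma int_multiple_in_both S1 S2 x :
  (forall (k : nat) u, S1 u -> S1 (k%:Z *: u)) ->
  (forall (k : nat) u, S2 u -> S2 (k%:Z *: u)) ->
  int_multiple_in S1 x -> int_multiple_in S2 x ->
  int_multiple_in (fun y => S1 y /\ S2 y) x.
Proof.
move=> S1Z S2Z [d1 d1_gt0 [y1 Sy1 y1x]] [d2 d2_gt0 [y2 Sy2 y2x]].
have y12 : d2%:Z *: y1 = d1%:Z *: y2.
  by apply: ratv_inj; rewrite !map_mxZ y1x y2x !scalerA !pmulrn mulrC.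
exists (d1 * d2)%N; first by rewrite muln_gt0 d1_gt0.
exists (d2%:Z *: y1); first by split; [apply: S1Z | rewrite y12; apply: S2Z].
by rewrite map_mxZ y1x scalerA pmulrn natrM mulrC.
Qed.

End IntMultiples.

Section Combinations.
Variables (m n : nat) (A : 'I_m -> 'rV[int]_n).
Implicit Type E : {set 'I_m}.

Definition QAset E (x : 'rV[rat]_n) : Prop :=
  exists c : 'I_m -> rat, x = \sum_(i in E) c i *: AQ A i.

Lemma NAset0 E : NAset A E 0.
Proof. by exists (fun _ => 0%N); rewrite big1 // => i _; rewrite scale0r. Qed.

Lemma NAsetD E u v : NAset A E u -> NAset A E v -> NAset A E (u + v).
Proof.
move=> [c1 ->] [c2 ->]; exists (fun i => (c1 i + c2 i)%N).
by rewrite -big_split; apply: eq_bigr => i _; rewrite PoszD scalerDl.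
Qed.

Lemma NAsetZ E (k : nat) u : NAset A E u -> NAset A E (k%:Z *: u).
Proof.
move=> [c ->]; exists (fun i => (k * c i)%N).
by rewrite scaler_sumr; apply: eq_bigr => i _; rewrite scalerA PoszM.
Qed.

Lemma ZAset0 E : ZAset A E 0.
Proof. by exists (fun _ => 0); rewrite big1 // => i _; rewrite scale0r. Qed.

Lemma ZAsetD E u v : ZAset A E u -> ZAset A E v -> ZAset A E (u + v).
Proof.
move=> [c1 ->] [c2 ->]; exists (fun i => c1 i + c2 i).
by rewrite -big_split; apply: eq_bigr => i _; rewrite scalerDl.
Qed.

Lemma ZAsetZ E (z : int) u : ZAset A E u -> ZAset A E (z *: u).
Proof.
move=> [c ->]; exists (fun i => z * c i).
by rewrite scaler_sumr; apply: eq_bigr => i _; rewrite scalerA.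
Qed.

Lemma NAset_ZAset E u : NAset A E u -> ZAset A E u.
Proof. by move=> [c ->]; exists (fun i => (c i)%:Z). Qed.

Lemma QAsetZ E (q : rat) x : QAset E x -> QAset E (q *: x).
Proof.
move=> [c ->]; exists (fun i => q * c i).
by rewrite scaler_sumr; apply: eq_bigr => i _; rewrite scalerA.
Qed.

Lemma ZAset_QAset E u : ZAset A E u -> QAset E (ratv u).
Proof.
move=> [c ->]; exists (fun i => (c i)%:~R).
by rewrite map_mx_sum; apply: eq_bigr => i _; rewrite map_mxZ.
Qed.

Lemma spanQ_sigmaE E x : spanQ (sigmaE A E) x <-> QAset E x.
Proof.
split=> [[k [v [c [v_sigma ->]]]] | [c ->]].
  apply: (big_ind (QAset E)) => [|x1 x2 [c1 ->] [c2 ->]|j _].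
  - by exists (fun _ => 0); rewrite big1 // => i _; rewrite scale0r.
  - exists (fun i => c1 i + c2 i).
    by rewrite -big_split; apply: eq_bigr => i _; rewrite scalerDl.
  - by apply: QAsetZ; have [c' [_ ->]] := v_sigma j; exists c'.
exists m, (fun i => if i \in E then AQ A i else 0), c; split.
  move=> j; case: ifP => jE.
    exists (fun i => (i == j)%:R); split=> [i|]; first exact: ler0n.
    rewrite (bigD1 j) //= eqxx scale1r big1 ?addr0 // => i /andP[_ /negbTE ->].
    by rewrite scale0r.
  by exists (fun _ => 0); split=> //; rewrite big1 // => i _; rewrite scale0r.
by rewrite big_mkcond; apply: eq_bigr => i _; case: ifP; rewrite ?scaler0.
Qed.

Lemma NAset_gen E i : i \in E -> NAset A E (A i).
Proof.
move=> iE; exists (fun j => (j == i) : nat).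
rewrite (bigD1 i) //= eqxx scale1r big1 ?addr0 // => j /andP[_ /negbTE ->].
by rewrite scale0r.
Qed.

Lemma QAset_int_multiple E x : QAset E x -> int_multiple_in (ZAset A E) x.
Proof.
move=> [c ->]; apply: int_multiple_in_sum => [|||i iE].
- exact: ZAset0.
- exact: ZAsetD.
- by move=> k u; apply: ZAsetZ.
- by apply: int_multiple_in_scale; apply/ZAsetZ/NAset_ZAset/NAset_gen.
Qed.

Lemma sigmaE_int_multiple E x : sigmaE A E x -> int_multiple_in (NAset A E) x.
Proof.
move=> [c [c_ge0 ->]]; apply: int_multiple_in_sum => [|||i iE].
- exact: NAset0.
- exact: NAsetD.
- exact: NAsetZ.
- apply: int_multiple_in_scale.
  by rewrite -[numq _]gez0_abs ?numq_ge0 //; apply/NAsetZ/NAset_gen.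
Qed.

Lemma sigmaE_of_NAset E (t : nat) a :
  (0 < t)%N -> NAset A E (t%:Z *: a) -> sigmaE A E (ratv a).
Proof.
move=> t_gt0 [c ta]; have t_neq0 : t%:R != 0 :> rat by rewrite pnatr_eq0 -lt0n.
exists (fun i => (c i)%:R / t%:R); split=> [i|]; first by rewrite divr_ge0.
apply: (scalerI t_neq0).
have -> : t%:R *: ratv a = ratv (t%:Z *: a) by rewrite map_mxZ.
rewrite ta map_mx_sum scaler_sumr.
by apply: eq_bigr => i _; rewrite map_mxZ scalerA mulrCA divff // mulr1 pmulrn.
Qed.

Lemma cone_direct_sum_of_s_gluing E1 E2 :
  s_gluing A E1 E2 -> cone_direct_sum A E1 E2.
Proof.
move=> [a [glue [t [t_gt0 [ta1 ta2]]]]].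
exists (ratv a); split; first exact: sigmaE_of_NAset ta1.
split=> [|x]; first exact: sigmaE_of_NAset ta2.
rewrite !spanQ_sigmaE; split=> [[/QAset_int_multiple x1 /QAset_int_multiple x2] | [q ->]].
  have [d d_gt0 [y /glue [z ->] yx]] :=
    int_multiple_in_both (fun k => @ZAsetZ E1 k) (fun k => @ZAsetZ E2 k) x1 x2.
  have d_neq0 : d%:R != 0 :> rat by rewrite pnatr_eq0 -lt0n.
  exists (z%:~R / d%:R); apply: (scalerI d_neq0).
  by rewrite -yx map_mxZ scalerA mulrCA divff // mulr1.
have [aZ1 aZ2] : ZAset A E1 a /\ ZAset A E2 a by apply/glue; exists 1; rewrite scale1r.
by split; apply/QAsetZ/ZAset_QAset.
Qed.

Lemma s_gluing_of_generator E1 E2 g (z : int) :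
  (forall x, ZAset A E1 x /\ ZAset A E2 x <-> exists w : int, x = w *: g) ->
  NAset A E1 (z *: g) -> NAset A E2 (z *: g) -> z != 0 -> s_gluing A E1 E2.
Proof.
move=> lattice zg1 zg2 z_neq0; have sgz2 : sgz z * sgz z = 1 by rewrite mulz_sg z_neq0.
have zE : `|z|%N%:Z *: (sgz z *: g) = z *: g by rewrite scalerA mulrC -intEsg.
exists (sgz z *: g); split; last by exists `|z|%N; rewrite absz_gt0 zE.
move=> x; rewrite lattice; split=> [] [w ->]; exists (w * sgz z).
  by rewrite scalerA.
by rewrite scalerA -mulrA sgz2 mulr1.
Qed.

Lemma s_gluing_of_cone_direct_sum E1 E2 :
  cone_direct_sum A E1 E2 -> s_gluing A E1 E2.
Proof.
move=> [v [v1 [v2 span_cap]]].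
pose L x := ZAset A E1 x /\ ZAset A E2 x.
have L_line x : L x -> exists q, ratv x = q *: v.
  by move=> [x1 x2]; apply/span_cap; rewrite !spanQ_sigmaE; split; apply: ZAset_QAset.
have [g lattice] : exists g, forall x, L x <-> exists z : int, x = z *: g.
  apply: (cyclic_of_line (L := L) _ _ _ L_line) => [|u w [u1 u2] [w1 w2]|z u [u1 u2]].
  - by split; apply: ZAset0.
  - by split; apply: ZAsetD.
  - by split; apply: ZAsetZ.
have [d d_gt0 [b [b1 b2] bv]] :=
  int_multiple_in_both (@NAsetZ E1) (@NAsetZ E2)
    (sigmaE_int_multiple v1) (sigmaE_int_multiple v2).
have [z bz] : exists z, b = z *: g by apply/lattice; split; apply: NAset_ZAset.
rewrite bz in b1 b2; have [z0 | z_neq0] := eqVneq z 0; last first.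
  exact: s_gluing_of_generator lattice b1 b2 z_neq0.
(* z = 0 happens only when v = 0; then the lattice is {0} and a = 0 glues. *)
have v0 : v = 0.
  have d_neq0 : d%:R != 0 :> rat by rewrite pnatr_eq0 -lt0n.
  by apply: (scalerI d_neq0); rewrite -bv bz z0 !scale0r map_mx0 scaler0.
have g0 : g = 0.
  have Lg : L g by apply/lattice; exists 1; rewrite scale1r.
  have [q gq] := L_line g Lg.
  by apply: ratv_inj; rewrite gq v0 scaler0 map_mx0.
by apply: (s_gluing_of_generator (z := 1) lattice); rewrite // g0 scaler0; apply: NAset0.
Qed.

End Combinations.

Theorem proposition4p2 (m n : nat) (A : 'I_m -> 'rV[int]_n)
    (E1 E2 : {set 'I_m}) :
  is_affine_semigroup A ->
  E1 != set0 -> E2 != set0 ->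
  E1 :&: E2 = set0 -> E1 :|: E2 = setT ->
  (s_gluing A E1 E2 <-> cone_direct_sum A E1 E2).
Proof.
(* The equivalence holds for arbitrary E1, E2. *)
move=> _ _ _ _ _; split.
  exact: cone_direct_sum_of_s_gluing.
exact: s_gluing_of_cone_direct_sum.
Qed.
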